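(* If a finite poset $P$ contains an articulation point, i.e., a point $x\in P$ comparable with every other point of $P$, then $P$ is an $\exists$-game.
   Context: A finite poset $P$ defines a poset game: two players alternate moves; a move consists of choosing a point $x$ of the current poset $Q$ and replacing $Q$ by $Q_x:=\{y\in Q: x\not\le y\}$ (i.e., removing $x$ and every point above it); the first player unable to move (because the poset is empty) loses. $P$ is an $\exists$-game if the player who moves first has a winning strategy, and a $\forall$-game otherwise. *)

From HB Require Import structures.
From mathcomp Require Import all_boot all_order.
Set Implicit Arguments. Unset Strict Implicit. Unset Printing Implicit Defensive.
Import Order.Theory.
Local Open Scope order_scope.

(* The poset game on a finite poset T (the carrier of a finPOrderType).
   Positions are subsets Q of T (with the induced order).  A move at x in Q
   replaces Q by Q_x = {y in Q | ~ x <= y}. *)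
Definition move {d} {T : finPOrderType d} (Q : {set T}) (x : T) : {set T} :=
  [set y in Q | ~~ (x <= y)].

(* [first_wins n Q] : with fuel n, the player to move in position Q has a
   winning strategy.  Each move strictly decreases #|Q|, so fuel n >= #|Q|
   computes the true value; we always use fuel #|Q|. *)
Fixpoint first_wins {d} {T : finPOrderType d} (n : nat) (Q : {set T}) : bool :=
  match n with
  | 0 => false
  | n'.+1 => [exists x in Q, ~~ first_wins n' (move Q x)]
  end.

Definition exists_game {d} (T : finPOrderType d) : Prop :=
  first_wins #|[set: T]| [set: T].

Definition articulation_point {d} {T : finPOrderType d} (x : T) : Prop :=
  forall y : T, y != x -> (x <= y) || (y <= x).

(* Strategy stealing.  Let x be an articulation point; every point not above x
   lies below x.  If the position obtained by playing x is lost for the player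
   to move, playing x wins.  Otherwise that position has a winning reply z,
   and z < x, so removing the up-set of z from P gives the same position as
   removing both up-sets: the first player wins by playing z at once. *)
From mathcomp Require Import all_boot all_order.
Import Order.Theory.
Set Implicit Arguments.
Unset Strict Implicit.
Local Open Scope order_scope.

Section PosetGame.

Variables (d : Order.disp_t) (T : finPOrderType d).
Implicit Types (Q : {set T}) (x y z : T).

Lemma move_proper Q x : x \in Q -> move Q x \proper Q.
Proof.
move=> xQ; apply/properP; split.
  by apply/subsetP=> y; rewrite inE => /andP[].
by exists x => //; rewrite inE lexx andbF.
Qed.

Lemma card_move Q x : x \in Q -> (#|move Q x| < #|Q|)%N.
Proof. by move/move_proper/proper_card. Qed.

Lemma move_moveC Q x z : z <= x -> move (move Q x) z = move Q z.
Proof.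
move=> zx; apply/setP=> y; rewrite !inE -andbA.
by case: (boolP (z <= y)) => [|nzy]; rewrite ?andbF // (contraNN (le_trans zx)).
Qed.

Lemma first_wins_fuel n m Q :
  (#|Q| <= n)%N -> (#|Q| <= m)%N -> first_wins n Q = first_wins m Q.
Proof.
elim: n m Q => [|n IHn] [|m] Q //=; rewrite ?leqn0 ?cards_eq0.
- by move=> /eqP -> _; apply/esym/existsP => -[y]; rewrite inE.
- by move=> _ /eqP ->; apply/existsP => -[y]; rewrite inE.
move=> Qn Qm; apply: eq_existsb => y; case: (boolP (y \in Q)) => //= yQ.
have Qy := card_move yQ.
by rewrite (IHn m) // -ltnS (leq_trans Qy).
Qed.

Definition wins Q := first_wins #|Q| Q.

Lemma winsE Q : wins Q = [exists x in Q, ~~ wins (move Q x)].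
Proof.
rewrite /wins; case: (posnP #|Q|) => [/eqP | Q_gt0].
  rewrite cards_eq0 => /eqP ->; rewrite cards0.
  by apply/esym/existsP => -[y]; rewrite inE.
rewrite -(prednK Q_gt0) /=; apply: eq_existsb => y.
case: (boolP (y \in Q)) => //= yQ.
by rewrite (@first_wins_fuel _ #|move Q y|) // -ltnS prednK // card_move.
Qed.

Lemma articulation_move_le x y Q :
  articulation_point x -> y \in move Q x -> y <= x.
Proof.
move=> art_x; rewrite inE => /andP[_ nxy].
have /art_x : y != x by apply: contraNneq nxy => ->.
by rewrite (negbTE nxy).
Qed.

End PosetGame.

Theorem mainTheorem2 (d : Order.disp_t) (T : finPOrderType d) :
  (exists x : T, articulation_point x) -> exists_game T.
Proof.
move=> [x art_x]; rewrite /exists_game -/(wins _) winsE.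
have xT : x \in [set: T] by rewrite inE.
case: (boolP (wins (move [set: T] x))) => [|lose_x]; last first.
  by apply/existsP; exists x; rewrite xT.
rewrite winsE => /existsP[z /andP[zD lose_z]].
apply/existsP; exists z; rewrite inE /=.
by rewrite -(move_moveC _ (articulation_move_le art_x zD)).
Qed.
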